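(* Let $S_1,S_2,\ldots,S_k$ be numerical semigroups and let $S = \bigcap_{i=1}^k S_i$. Suppose that $d_i \in S_i \setminus \{0\}$ for $i=1,2,\ldots,k$. Then there exists an $A\in \mathsf{M}_{d_1+d_2+\cdots + d_k}(\mathbb{Q})$ such that $\mathcal{S}(A) = S$. In particular, $\dim_{\mathrm{mat}} S \leq d_1 + d_2 + \cdots + d_k$.
   Context: $\mathbb{N} = \{0,1,2,\ldots\}$. A semigroup means an additive subsemigroup of $\mathbb{N}$ containing $0$; a numerical semigroup is a semigroup with finite complement in $\mathbb{N}$. $\mathsf{M}_d(X)$ denotes the $d\times d$ matrices with entries in $X$. For $A \in \mathsf{M}_d(\mathbb{Q})$, $\mathcal{S}(A) = \{ n \in \mathbb{N} : A^n \in \mathsf{M}_d(\mathbb{Z})\}$. The matricial dimension $\dim_{\mathrm{mat}} S$ of a semigroup $S$ is the smallest $d$ such that $S = \mathcal{S}(A)$ for some $A \in \mathsf{M}_d(\mathbb{Q})$. *)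

From mathcomp Require Import all_boot all_order all_algebra.
Set Implicit Arguments. Unset Strict Implicit. Unset Printing Implicit Defensive.
Import Order.TTheory GRing.Theory Num.Theory.
Local Open Scope ring_scope.

Definition is_semigroup (S : nat -> Prop) : Prop :=
  S 0%N /\ (forall a b, S a -> S b -> S (a + b)%N).

Definition numerical_semigroup (S : nat -> Prop) : Prop :=
  is_semigroup S /\ exists N : nat, forall n, (N <= n)%N -> S n.

Definition mxpow (m : nat) (A : 'M[rat]_m) (n : nat) : 'M[rat]_m :=
  iter n (mulmx A) 1%:M.

Definition int_mx (m : nat) (A : 'M[rat]_m) : Prop :=
  forall i j, A i j \is a Num.int.

Definition SA (m : nat) (A : 'M[rat]_m) : nat -> Prop :=
  fun n => int_mx (mxpow A n).

(* Fix [d > 0] in a numerical semigroup [S] and let [w r] be the least [m]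
   with [m d + r] in [S] (so [w r d + r] runs over the Apéry set of [d]).
   The potential [phi m = m / d - w (m mod d)] satisfies [S = {m | phi m >= 0}],
   and, since [S] is closed under addition and contains the Apéry set,
   [n] lies in [S] iff [phi j <= phi (j + n)] for every residue [j < d].
   The weighted cyclic permutation matrix sending [e_j] to
   [2 ^ (phi (j + 1) - phi j) e_(j + 1 mod d)] has as [n]-th power the
   weighted permutation with weights [2 ^ (phi (j + n) - phi j)], which is
   integral exactly when [n] lies in [S].  For an intersection of
   semigroups, take the block-diagonal sum of these matrices. *)
From mathcomp Require Import all_boot all_order all_algebra zify.
From Stdlib Require Import ClassicalEpsilon.
Set Implicit Arguments. Unset Strict Implicit. Unset Printing Implicit Defensive.
Import Order.TTheory GRing.Theory Num.Theory.
Local Open Scope ring_scope.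

Lemma int_exprz2 (z : int) : ((2 : rat) ^ z \is a Num.int) = (0 <= z).
Proof.
case: z => n; first by rewrite -exprnP rpredX.
rewrite NegzE -invr_expz -exprnP /=; apply/negbTE/negP => /norm_intr_ge1.
have two_n_gt1 : (1 : rat) < 2 ^+ n.+1 by rewrite exprn_egt1.
have two_n_gt0 : (0 : rat) < 2 ^+ n.+1 by rewrite (lt_trans ltr01).
rewrite invr_eq0 gt_eqF // ger0_norm; last by rewrite invr_ge0 ltW.
by rewrite invf_ge1 // leNgt two_n_gt1 => /(_ isT).
Qed.

Definition cycle_potential (w : nat -> nat) (d m : nat) : int :=
  (m %/ d)%N%:Z - (w (m %% d)%N)%:Z.

Definition cycle_mx (w : nat -> nat) (d : nat) : 'M[rat]_d :=
  \matrix_(i, j) if i == (j.+1 %% d)%N :> nat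
                 then 2 ^ (cycle_potential w d j.+1 - cycle_potential w d j)
                 else 0.

Section CycleMatrix.

Variables (w : nat -> nat) (d : nat).
Hypothesis d_gt0 : (0 < d)%N.
Local Notation phi := (cycle_potential w d).

Lemma cycle_potential_addMn a b : phi (a * d + b)%N = a%:Z + phi b.
Proof. by rewrite /cycle_potential divnMDl // modnMDl PoszD addrA. Qed.

Lemma cycle_potential_small j : (j < d)%N -> phi j = - (w j)%:Z.
Proof. by move=> lt_jd; rewrite /cycle_potential divn_small // modn_small // add0r. Qed.

Lemma cycle_potential_step m : phi m.+1 - phi m = phi (m %% d)%N.+1 - phi (m %% d)%N.
Proof. rewrite {1 2}(divn_eq m d) -addnS !cycle_potential_addMn; lia. Qed.

Lemma mxpow_cycle_mx n (i j : 'I_d) :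
  mxpow (cycle_mx w d) n i j =
  if i == ((j + n) %% d)%N :> nat then 2 ^ (phi (j + n) - phi j) else 0.
Proof.
elim: n i => [|n IHn] i.
  rewrite /mxpow /= mxE addn0 modn_small // subrr expr0z.
  by case: (i =P j) => [->|ne_ij]; rewrite ?eqxx //; case: eqP => // /val_inj.
rewrite /mxpow /= -/(mxpow _ n) mxE.
pose k : 'I_d := Ordinal (ltn_pmod (j + n) d_gt0).
rewrite (bigD1 k) //= big1 ?addr0; last first.
  move=> l ne_lk; rewrite IHn ifF ?mulr0 //; apply: contraNF ne_lk => /eqP eq_l.
  exact/eqP/val_inj.
rewrite IHn eqxx mxE /=.
have -> : (((j + n) %% d).+1 %% d = (j + n).+1 %% d)%N.
  by rewrite -addn1 modnDml addn1.
rewrite addnS; case: eqP => _; last by rewrite mul0r.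
by rewrite -(@expfzDr _ 2) // -cycle_potential_step addrA subrK.
Qed.

Lemma int_mxpow_cycle_mx n :
  int_mx (mxpow (cycle_mx w d) n) <-> forall j : 'I_d, phi j <= phi (j + n).
Proof.
split=> [int_An j | phi_le i j].
  have := int_An (Ordinal (ltn_pmod (j + n) d_gt0)) j.
  by rewrite mxpow_cycle_mx /= eqxx int_exprz2 subr_ge0.
rewrite mxpow_cycle_mx; case: ifP => _; last exact: rpred0.
by rewrite int_exprz2 subr_ge0 phi_le.
Qed.

End CycleMatrix.

Section AperyWeight.

Variables (S : nat -> Prop) (d : nat).
Hypotheses (S_num : numerical_semigroup S) (d_gt0 : (0 < d)%N).

Lemma exists_mem_residue r : exists m, (excluded_middle_informative (S (m * d + r)%N) : bool).
Proof.
have [_ [N geN_S]] := S_num; exists N; apply/sumboolP/geN_S.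
by rewrite (leq_trans _ (leq_addr _ _)) // leq_pmulr.
Qed.

Definition apery_weight r : nat := ex_minn (exists_mem_residue r).

Lemma apery_weight_mem r : S (apery_weight r * d + r)%N.
Proof. by rewrite /apery_weight; case: ex_minnP => m /sumboolP. Qed.

Lemma apery_weight_min r m : S (m * d + r)%N -> (apery_weight r <= m)%N.
Proof. by rewrite /apery_weight; case: ex_minnP => m' _ min_m' /sumboolP /min_m'. Qed.

Lemma apery_weight0 : apery_weight 0 = 0%N.
Proof.
apply/eqP; rewrite -leqn0; apply: apery_weight_min.
by rewrite mul0n; case: S_num => -[].
Qed.

Hypothesis Sd : S d.

Lemma mem_multiple m : S (m * d)%N.
Proof.
have [[S0 SD] _] := S_num.
by elim: m => [|m IHm]; [exact: S0 | rewrite mulSn; exact: SD].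
Qed.

Lemma mem_residueP r m : S (m * d + r)%N <-> (apery_weight r <= m)%N.
Proof.
split=> [|/subnKC <-]; first exact: apery_weight_min.
rewrite mulnDl addnAC; apply: S_num.1.2 (mem_multiple _).
exact: apery_weight_mem.
Qed.

Local Notation phi := (cycle_potential apery_weight d).

Lemma mem_cycle_potential m : S m <-> 0 <= phi m.
Proof. by rewrite {1}(divn_eq m d) mem_residueP /cycle_potential subr_ge0 lez_nat. Qed.

Lemma mem_cycle_potential_shift n : S n <-> forall j : 'I_d, phi j <= phi (j + n).
Proof.
split=> [Sn j | phi_le].
  have /mem_cycle_potential : S (apery_weight j * d + (j + n))%N.
    by rewrite addnA; apply: S_num.1.2 Sn; exact: apery_weight_mem.
  by rewrite cycle_potential_addMn // [phi j]cycle_potential_small //; lia.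
apply/mem_cycle_potential; have := phi_le (Ordinal d_gt0).
by rewrite /= add0n cycle_potential_small // apery_weight0 oppr0.
Qed.

End AperyWeight.

Lemma numerical_semigroup_SA S d :
  numerical_semigroup S -> (0 < d)%N -> S d ->
  exists A : 'M[rat]_d, forall n, SA A n <-> S n.
Proof.
move=> S_num d_gt0 Sd; exists (cycle_mx (apery_weight S_num d_gt0) d) => n.
by rewrite /SA int_mxpow_cycle_mx // (mem_cycle_potential_shift S_num d_gt0 Sd).
Qed.

Lemma mul_mxdiag (R : pzSemiRingType) k (p_ : 'I_k -> nat)
    (D E : forall i, 'M[R]_(p_ i)) :
  mxdiag D *m mxdiag E = mxdiag (fun i => D i *m E i).
Proof.
rewrite [mxdiag E]/mxdiag mul_mxdiag_mxblock /mxdiag; apply/eq_mxblock => i j.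
by case: eqVneq => [->|]; rewrite ?conform_mx_id ?mulmx0.
Qed.

Lemma mxpow_mxdiag k (p_ : 'I_k -> nat) (D : forall i, 'M[rat]_(p_ i)) n :
  mxpow (mxdiag D) n = mxdiag (fun i => mxpow (D i) n).
Proof.
elim: n => [|n IHn]; first by rewrite /mxpow /= mxdiagZ.
by rewrite /mxpow /= -!/(mxpow _ n) IHn mul_mxdiag.
Qed.

Lemma int_mx_mxdiag k (p_ : 'I_k -> nat) (D : forall i, 'M[rat]_(p_ i)) :
  int_mx (mxdiag D) <-> forall i, int_mx (D i).
Proof.
split=> [int_D i a b | int_D s t].
  by rewrite -(submxblock_diag D i) /submxblock mxE; exact: int_D.
rewrite /mxdiag mxE; case: eqP => [eq_st|_]; last by rewrite mxE rpred0.
move: (tagnat.sig2 t); rewrite -eq_st => b; rewrite conform_mx_id; exact: int_D.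
Qed.

Theorem theorem2p5 (k : nat) (Ss : 'I_k -> nat -> Prop) (d : 'I_k -> nat) :
  (0 < k)%N ->
  (forall i, numerical_semigroup (Ss i)) ->
  (forall i, Ss i (d i) /\ (0 < d i)%N) ->
  exists A : 'M[rat]_(\sum_(i < k) d i),
    forall n : nat, SA A n <-> (forall i, Ss i n).
Proof.
move=> _ Ss_num Ss_d.
have /fin_all_exists[B SA_B] i :
    exists B : 'M[rat]_(d i), forall n, SA B n <-> Ss i n.
  by have [Sd d_gt0] := Ss_d i; exact: numerical_semigroup_SA.
exists (mxdiag B) => n; rewrite /SA mxpow_mxdiag int_mx_mxdiag.
by split=> Sn i; apply/SA_B/Sn.
Qed.
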